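(* Let $\phi=\tilde p/p$ be an irreducible rational inner function on $\mathbb{D}^3$ of degree $(m,n,1)$, with $p(z)=p_1(z_1,z_2)+z_3p_2(z_1,z_2)$, $\tilde p(z)=z_3\tilde p_1(z_1,z_2)+\tilde p_2(z_1,z_2)$. Assume $(1,1,1)\in\mathcal{Z}_p\cap\mathbb{T}^3$ and that the vertical line $\{(1,1)\}\times\mathbb{T}$ is not contained in $\mathcal{Z}_p$. Let $\psi^0=-\tilde p_2/\tilde p_1$ and $\rho(\theta_1,\theta_2)=1-|\psi^0(e^{i\theta_1},e^{i\theta_2})|^2$, which is real analytic near $(0,0)$, with Taylor expansion $\rho(\theta_1,\theta_2)=\sum_{k,\ell\ge0}c_{k,\ell}\theta_1^k\theta_2^\ell$ at the origin. Then: (1) $c_{0,0}=c_{1,0}=c_{0,1}=0$; (2) the quadratic form $Q(\theta_1,\theta_2)=c_{2,0}\theta_1^2+c_{1,1}\theta_1\theta_2+c_{0,2}\theta_2^2$ is positive semi-definite; (3) if $Q$ is strictly positive definite, then $(1,1,1)$ is an isolated point of $\mathcal{Z}_p\cap\mathbb{T}^3$ (an isolated singularity of $\phi$ on $\mathbb{T}^3$); (4) if $Q$ is identically $0$, then $c_{3,0}=c_{2,1}=c_{1,2}=c_{0,3}=0$.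
   Context: A rational inner function (RIF) on $\mathbb{D}^3$ is a rational function holomorphic on the tridisk with unimodular radial limits a.e. on $\mathbb{T}^3$; it is written $\phi=\tilde p/p$ with $p$ zero-free on $\mathbb{D}^3$, $p,\tilde p$ without common factors, $\dim(\mathcal{Z}_p\cap\mathbb{T}^3)\le1$. For degree $(m,n,1)$, $\tilde p(z)=z_1^mz_2^nz_3\overline{p(1/\bar z_1,1/\bar z_2,1/\bar z_3)}$ and $\tilde p_j(z_1,z_2)=z_1^mz_2^n\overline{p_j(1/\bar z_1,1/\bar z_2)}$. The singular set of $\phi$ on $\mathbb{T}^3$ is $\mathcal{Z}_p\cap\mathbb{T}^3$, where $\mathcal{Z}_p$ is the zero set of $p$. *)

From HB Require Import structures.
From mathcomp Require Import all_boot all_order all_algebra.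
From mathcomp Require Import complex.
From mathcomp Require Import all_classical all_reals all_analysis.
Set Implicit Arguments. Unset Strict Implicit. Unset Printing Implicit Defensive.
Import Order.TTheory GRing.Theory Num.Theory.
Local Open Scope ring_scope.

Section RIFDefs.
Variable R : realType.
Local Notation C := (R[i]).

Definition cabs (z : C) : R := Normc.normc z.

Definition expi (t : R) : C := Complex (cos t) (sin t).

(* Bivariate polynomials in (z1,z2): q : {poly {poly C}}, outer variable z2,
   inner variable z1; q`_j`_i is the coefficient of z1^i z2^j. *)
Definition eval2 (q : {poly {poly C}}) (z1 z2 : C) : C :=
  (map_poly (fun r : {poly C} => r.[z1]) q).[z2].

(* Trivariate polynomials in (z1,z2,z3): p : {poly {poly {poly C}}}, outer
   variable z3, then z2, inner z1. *)
Definition eval3 (p : {poly {poly {poly C}}}) (z1 z2 z3 : C) : C :=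
  (map_poly (fun q => eval2 q z1 z2) p).[z3].

Definition coef3 (p : {poly {poly {poly C}}}) (i j k : nat) : C := p`_k`_j`_i.

Definition has_multideg3 (m n k : nat) (p : {poly {poly {poly C}}}) : Prop :=
  [/\ (forall i j l, coef3 p i j l != 0 -> [&& (i <= m)%N, (j <= n)%N & (l <= k)%N]),
      (exists j l, coef3 p m j l != 0),
      (exists i l, coef3 p i n l != 0) &
      (exists i j, coef3 p i j k != 0)].

(* reflections  q~(z1,z2) = z1^m z2^n conj(q(1/conj z1, 1/conj z2)),
   p~(z) = z1^m z2^n z3^k conj(p(1/conj z1, 1/conj z2, 1/conj z3)),
   written coefficientwise *)
Definition refl2 (m n : nat) (q : {poly {poly C}}) : {poly {poly C}} :=
  \poly_(j < n.+1) \poly_(i < m.+1) conjc (q`_(n - j)`_(m - i)).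

Definition refl3 (m n k : nat) (p : {poly {poly {poly C}}}) : {poly {poly {poly C}}} :=
  \poly_(l < k.+1) \poly_(j < n.+1) \poly_(i < m.+1)
     conjc (coef3 p (m - i) (n - j) (k - l)).

Definition rdvd (T : comNzRingType) (a b : T) : Prop := exists c, b = a * c.

Definition no_common_factor (T : comUnitRingType) (a b : T) : Prop :=
  forall d : T, rdvd d a -> rdvd d b -> d \is a GRing.unit.

Definition ring_irreducible (T : comUnitRingType) (a : T) : Prop :=
  [/\ a != 0, a \isn't a GRing.unit &
      forall b c : T, a = b * c -> b \is a GRing.unit \/ c \is a GRing.unit].

Definition zero_free_D3 (p : {poly {poly {poly C}}}) : Prop :=
  forall z1 z2 z3 : C, cabs z1 < 1 -> cabs z2 < 1 -> cabs z3 < 1 ->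
    eval3 p z1 z2 z3 != 0.

Definition in_ZpT3 (p : {poly {poly {poly C}}}) (z1 z2 z3 : C) : Prop :=
  [/\ cabs z1 = 1, cabs z2 = 1, cabs z3 = 1 & eval3 p z1 z2 z3 = 0].

(* phi = p~/p is a rational inner function of degree (m,n,1) on D^3 *)
Definition RIF_deg_mn1 (m n : nat) (p : {poly {poly {poly C}}}) : Prop :=
  [/\ has_multideg3 m n 1 p, zero_free_D3 p & no_common_factor p (refl3 m n 1 p)].

Definition irreducible_RIF_deg_mn1 (m n : nat) (p : {poly {poly {poly C}}}) : Prop :=
  RIF_deg_mn1 m n p /\ ring_irreducible p.

Definition psi0 (m n : nat) (p1 p2 : {poly {poly C}}) (z1 z2 : C) : C :=
  - eval2 (refl2 m n p2) z1 z2 / eval2 (refl2 m n p1) z1 z2.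

Definition rho (m n : nat) (p1 p2 : {poly {poly C}}) (t1 t2 : R) : R :=
  1 - cabs (psi0 m n p1 p2 (expi t1) (expi t2)) ^+ 2.

Definition taylor_coef (f : R -> R -> R) (k l : nat) : R :=
  (derive1n k (fun t1 => derive1n l (fun t2 => f t1 t2) 0) 0)
    / ((k`!)%:R * (l`!)%:R).

End RIFDefs.

From mathcomp Require Import all_boot all_order all_algebra.
From mathcomp Require Import complex.
From mathcomp Require Import all_classical all_reals all_analysis.
From mathcomp Require Import ring lra.
Set Implicit Arguments. Unset Strict Implicit. Unset Printing Implicit Defensive.
Import Order.TTheory GRing.Theory Num.Theory numFieldNormedType.Exports.
Local Open Scope classical_set_scope.
Local Open Scope ring_scope.

(* Near (1,1) the denominator ~p1 of psi^0 does not vanish: on T^2 one has |~q| = |q|, and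
   p(1,1,1) = 0 together with the vertical line not lying in Z_p forces
   p2(1,1) = - p1(1,1) <> 0.  Since p has no zeros on D^3, |p2| <= |p1| on D^2 and, letting
   r -> 1 along rays, on T^2; so rho >= 0 and rho(0,0) = 0.  The origin is thus a local
   minimum of rho: along each line s |-> rho(s a, s b) the first derivative vanishes, the
   second one, 2 Q(a,b), is nonnegative, and when it vanishes so does the third one, which
   gives (1), (2) and (4).  If Q is positive definite, a uniform bound on third derivatives
   keeps the second derivative positive along all lines near 0, so rho > 0 on a punctured
   neighbourhood of 0; but a zero of p on T^3 near (1,1,1) has |p1| = |p2|, i.e. rho = 0
   there, so it is (1,1,1) itself.
   Smoothness of rho near 0 comes from writing it as an expression in cos t_j, sin t_j built
   with the field operations, which can be differentiated symbolically. *)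

Section TrigExpr.
Variable R : realType.

(* Real expressions in two variables (t1, t2), with symbolic partial derivatives; [TVar1]
   is only needed for the radial variable in [zero_free_torus_le]. *)
Inductive texpr : Type :=
 | TConst of R | TVar1 | TCos1 | TSin1 | TCos2 | TSin2
 | TAdd of texpr & texpr | TOpp of texpr | TMul of texpr & texpr | TInv of texpr.

Fixpoint teval (e : texpr) (t1 t2 : R) : R :=
  match e with
  | TConst c => c | TVar1 => t1 | TCos1 => cos t1 | TSin1 => sin t1
  | TCos2 => cos t2 | TSin2 => sin t2
  | TAdd a b => teval a t1 t2 + teval b t1 t2
  | TOpp a => - teval a t1 t2
  | TMul a b => teval a t1 t2 * teval b t1 t2
  | TInv a => (teval a t1 t2)^-1
  end.

(* [tderiv true] differentiates in the first variable, [tderiv false] in the second. *)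
Fixpoint tderiv (first : bool) (e : texpr) : texpr :=
  match e with
  | TConst _ => TConst 0
  | TVar1 => TConst (if first then 1 else 0)
  | TCos1 => if first then TOpp TSin1 else TConst 0
  | TSin1 => if first then TCos1 else TConst 0
  | TCos2 => if first then TConst 0 else TOpp TSin2
  | TSin2 => if first then TConst 0 else TCos2
  | TAdd a b => TAdd (tderiv first a) (tderiv first b)
  | TOpp a => TOpp (tderiv first a)
  | TMul a b => TAdd (TMul (tderiv first a) b) (TMul a (tderiv first b))
  | TInv a => TMul (TOpp (tderiv first a)) (TMul (TInv a) (TInv a))
  end.

Definition tdir (a b : R) (e : texpr) : texpr :=
  TAdd (TMul (TConst a) (tderiv true e)) (TMul (TConst b) (tderiv false e)).

Fixpoint tdefined (e : texpr) (t1 t2 : R) : Prop :=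
  match e with
  | TAdd a b | TMul a b => tdefined a t1 t2 /\ tdefined b t1 t2
  | TOpp a => tdefined a t1 t2
  | TInv a => tdefined a t1 t2 /\ teval a t1 t2 != 0
  | _ => True
  end.

Fixpoint tdenoms_ge (e : texpr) (mu : R) (P : R -> R -> Prop) : Prop :=
  match e with
  | TAdd a b | TMul a b => tdenoms_ge a mu P /\ tdenoms_ge b mu P
  | TOpp a => tdenoms_ge a mu P
  | TInv a => tdenoms_ge a mu P /\ (forall t1 t2, P t1 t2 -> mu <= `|teval a t1 t2|)
  | _ => True
  end.

Fixpoint tinv_free (e : texpr) : bool :=
  match e with
  | TAdd a b | TMul a b => tinv_free a && tinv_free b
  | TOpp a => tinv_free a
  | TInv _ => false
  | _ => true
  end.

Lemma tdenoms_ge_deriv first e mu P : tdenoms_ge e mu P -> tdenoms_ge (tderiv first e) mu P.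
Proof.
elim: e => //=; try by case: first.
- by move=> a IHa b IHb [/IHa ? /IHb ?].
- by move=> a IHa b IHb [ha hb]; do !split => //; [apply: IHa | apply: IHb].
- by move=> a IHa [ha hb]; do !split => //; apply: IHa.
Qed.

Lemma tdenoms_ge_iter_deriv first k e mu P :
  tdenoms_ge e mu P -> tdenoms_ge (iter k (tderiv first) e) mu P.
Proof. by move=> he; elim: k => //= k IH; apply: tdenoms_ge_deriv. Qed.

Lemma tdenoms_ge_iter_dir a b k e mu P :
  tdenoms_ge e mu P -> tdenoms_ge (iter k (tdir a b) e) mu P.
Proof. by move=> he; elim: k => //= k IH; do !split => //; apply: tdenoms_ge_deriv. Qed.

Lemma tdenoms_ge_defined e mu P t1 t2 :
  0 < mu -> tdenoms_ge e mu P -> P t1 t2 -> tdefined e t1 t2.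
Proof.
move=> mu0; elim: e => //=.
- by move=> a IHa b IHb [ha hb] hP; split; [apply: IHa | apply: IHb].
- by move=> a IHa b IHb [ha hb] hP; split; [apply: IHa | apply: IHb].
- move=> a IHa [ha hb] hP; split; first exact: IHa.
  by rewrite -normr_gt0; apply: lt_le_trans (hb _ _ hP).
Qed.

Lemma tdenoms_ge_bounded e mu P (K : R) : 0 < mu ->
  (forall t1 t2, P t1 t2 -> `|t1| <= K) -> tdenoms_ge e mu P ->
  exists M, 0 <= M /\ forall t1 t2, P t1 t2 -> `|teval e t1 t2| <= M.
Proof.
move=> mu0 HK; have trig_le1 (x : R) : `|cos x| <= 1 /\ `|sin x| <= 1.
  by rewrite !ler_norml cos_le1 cos_geN1 sin_le1 sin_geN1.
elim: e => /=.
- by move=> c _; exists `|c|.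
- move=> _; exists (Num.max K 0); split; first by rewrite le_max lexx orbT.
  by move=> t1 t2 /HK h; rewrite le_max h.
- by move=> _; exists 1; split=> // t1 t2 _; case: (trig_le1 t1).
- by move=> _; exists 1; split=> // t1 t2 _; case: (trig_le1 t1).
- by move=> _; exists 1; split=> // t1 t2 _; case: (trig_le1 t2).
- by move=> _; exists 1; split=> // t1 t2 _; case: (trig_le1 t2).
- move=> a IHa b IHb [/IHa [Ma [Ma0 Ha]] /IHb [Mb [Mb0 Hb]]].
  exists (Ma + Mb); split; first exact: addr_ge0.
  by move=> t1 t2 hP; apply: le_trans (ler_normD _ _) _; apply: lerD; [apply: Ha | apply: Hb].
- by move=> a IHa /IHa [Ma [Ma0 Ha]]; exists Ma; split=> // t1 t2 hP; rewrite normrN; apply: Ha.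
- move=> a IHa b IHb [/IHa [Ma [Ma0 Ha]] /IHb [Mb [Mb0 Hb]]].
  exists (Ma * Mb); split; first exact: mulr_ge0.
  by move=> t1 t2 hP; rewrite normrM; apply: ler_pM => //; [apply: Ha | apply: Hb].
- move=> a _ [_ hb]; exists mu^-1; split; first by rewrite invr_ge0 ltW.
  move=> t1 t2 hP; have h := hb _ _ hP.
  have hpos : 0 < `|teval a t1 t2| by apply: lt_le_trans h.
  by rewrite normfV lef_pV2 ?posrE.
Qed.

Lemma tdenoms_ge_bounded_fam (I : finType) (E : I -> texpr) mu P (K : R) : 0 < mu ->
  (forall t1 t2, P t1 t2 -> `|t1| <= K) -> (forall i, tdenoms_ge (E i) mu P) ->
  exists M, forall i t1 t2, P t1 t2 -> `|teval (E i) t1 t2| <= M.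
Proof.
move=> mu0 HK hE.
suff [M HM] : exists M, forall i t1 t2, i \in enum I -> P t1 t2 -> `|teval (E i) t1 t2| <= M.
  by exists M => i t1 t2; apply: HM; rewrite mem_enum.
elim: (enum I) => [|i s [M HM]]; first by exists 0.
have [Mi [_ Hi]] := tdenoms_ge_bounded mu0 HK (hE i).
exists (Num.max M Mi) => j t1 t2; rewrite inE => /predU1P [-> | js] hP; rewrite le_max.
  by rewrite Hi ?orbT.
by rewrite HM.
Qed.

Lemma tinv_free_denoms_ge e mu P : tinv_free e -> tdenoms_ge e mu P.
Proof. by elim: e => //= [a IHa b IHb | a IHa b IHb] /andP [/IHa ? /IHb ?]. Qed.

Lemma tinv_free_defined e t1 t2 : tinv_free e -> tdefined e t1 t2.
Proof. by elim: e => //= [a IHa b IHb | a IHa b IHb] /andP [/IHa ? /IHb ?]. Qed.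

Lemma tinv_free_deriv first e : tinv_free e -> tinv_free (tderiv first e).
Proof.
elim: e => //=; try by case: first.
- by move=> a IHa b IHb /andP [/IHa -> /IHb ->].
- by move=> a IHa b IHb /andP [ha hb]; rewrite ha hb IHa // IHb.
Qed.

Lemma is_derive_affine (x a s : R) : is_derive s 1 (fun s : R => x + s * a) a.
Proof.
apply: is_derive_eq (is_deriveD (is_derive_cst x s 1)
  (is_deriveM (is_derive_id s (1 : R)) (is_derive_cst a s 1))) _.
by rewrite /= add0r scaler0 add0r /GRing.scale /= mulr1.
Qed.

Lemma is_derive_teval_line e x1 x2 a b s :
  tdefined e (x1 + s * a) (x2 + s * b) ->
  is_derive s 1 (fun s => teval e (x1 + s * a) (x2 + s * b))
    (teval (tdir a b e) (x1 + s * a) (x2 + s * b)).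
Proof.
rewrite /tdir /=; elim: e => /=.
- by move=> c _; apply: is_derive_eq (is_derive_cst c s 1) _; ring.
- by move=> _; apply: is_derive_eq (is_derive_affine x1 a s) _; ring.
- move=> _; apply: is_derive_eq
    (is_derive1_comp (is_derive_cos _) (is_derive_affine x1 a s)) _; ring.
- move=> _; apply: is_derive_eq
    (is_derive1_comp (is_derive_sin _) (is_derive_affine x1 a s)) _; ring.
- move=> _; apply: is_derive_eq
    (is_derive1_comp (is_derive_cos _) (is_derive_affine x2 b s)) _; ring.
- move=> _; apply: is_derive_eq
    (is_derive1_comp (is_derive_sin _) (is_derive_affine x2 b s)) _; ring.
- move=> u IHu v IHv [/IHu Hu /IHv Hv].
  by apply: is_derive_eq (is_deriveD Hu Hv) _; ring.
- by move=> u IHu /IHu Hu; apply: is_derive_eq (is_deriveN Hu) _; ring.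
- move=> u IHu v IHv [/IHu Hu /IHv Hv].
  by apply: is_derive_eq (is_deriveM Hu Hv) _; rewrite /GRing.scale /=; ring.
- move=> u IHu [/IHu Hu nz].
  apply: is_derive_eq (@is_deriveV R (fun s => teval u (x1 + s * a) (x2 + s * b)) s _ 1 nz Hu) _.
  by rewrite /GRing.scale /= expr2 invfM; ring.
Qed.

Lemma is_derive_teval1 e t1 t2 : tdefined e t1 t2 ->
  is_derive t1 1 (fun s => teval e s t2) (teval (tderiv true e) t1 t2).
Proof.
move=> h; have := @is_derive_teval_line e 0 t2 1 0 t1.
rewrite add0r mulr1 mulr0 addr0 => /(_ h).
under eq_fun do rewrite add0r mulr1 mulr0 addr0.
by move=> H; apply: is_derive_eq H _; rewrite /=; ring.
Qed.

Lemma is_derive_teval2 e t1 t2 : tdefined e t1 t2 ->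
  is_derive t2 1 (fun s => teval e t1 s) (teval (tderiv false e) t1 t2).
Proof.
move=> h; have := @is_derive_teval_line e t1 0 0 1 t2.
rewrite add0r mulr1 mulr0 addr0 => /(_ h).
under eq_fun do rewrite add0r mulr1 mulr0 addr0.
by move=> H; apply: is_derive_eq H _; rewrite /=; ring.
Qed.

Lemma teval_tderivC e t1 t2 :
  teval (tderiv true (tderiv false e)) t1 t2 = teval (tderiv false (tderiv true e)) t1 t2.
Proof. by elim: e => [c||||||u IHu v IHv|u IHu|u IHu v IHv|u IHu] /=; rewrite ?IHu ?IHv; ring. Qed.

End TrigExpr.

Arguments TVar1 {R}.
Arguments TCos1 {R}.
Arguments TSin1 {R}.
Arguments TCos2 {R}.
Arguments TSin2 {R}.

Section RealCalculus.
Variable R : realType.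

Lemma derive1n_chain (g : R -> R) (F : nat -> R -> R) (lo hi : R) :
  (forall k s, lo < s < hi -> is_derive s 1 (F k) (F k.+1 s)) ->
  (forall s, lo < s < hi -> g s = F 0%N s) ->
  forall k s, lo < s < hi -> derive1n k g s = F k s.
Proof.
move=> HF Hg; elim=> [|k IH] s hs; first by rewrite derive1n0; apply: Hg.
rewrite derive1nS derive1E.
have -> : 'D_1 (derive1n k g) s = 'D_1 (F k) s.
  apply: near_eq_derive.
  have : s \in `]lo, hi[ by rewrite in_itv /=.
  move/near_in_itvoo; apply: filterS => y; rewrite in_itv /=; exact: IH.
by have [_ ->] := HF k s hs.
Qed.

Lemma derive_sign_near0 (phi : R -> R) (d : R) :
  is_derive (0 : R) (1 : R) phi d -> phi 0 = 0 -> d != 0 ->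
  exists2 e, 0 < e & forall c, 0 < `|c| < e -> 0 < c * d * phi c.
Proof.
move=> [dv dval] phi0 dn0.
have := cvgr_dist_lt _ _ dv; rewrite -/(derive phi 0 1) dval.
move=> /(_ _ `|d|); rewrite normr_gt0 => /(_ dn0) /nbhs_ballP [e e0 He].
exists e => // c /andP [c0 ce].
have := He c; rewrite /ball /= sub0r normrN => /(_ ce).
rewrite -normr_gt0 => /(_ c0); rewrite /= addr0 phi0 subr0 /GRing.scale /= mulr1.
set q := c^-1 * phi c => hq.
have dq : 0 < d * q.
  have : d * (d - q) < d ^+ 2.
    apply: le_lt_trans (ler_norm _) _.
    by rewrite normrM -real_normK ?num_real // ltr_pM2l // normr_gt0.
  lra.
have -> : c * d * phi c = c ^+ 2 * (d * q) by rewrite /q; field; rewrite -normr_gt0.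
by rewrite mulr_gt0 // exprn_even_gt0 //= -normr_gt0.
Qed.

Lemma MVT_in (g g' : R -> R) (lo hi u w : R) : lo < u -> u < w -> w < hi ->
  (forall x, lo < x < hi -> is_derive x 1 g (g' x)) ->
  exists2 c, u < c < w & g w - g u = g' c * (w - u).
Proof.
move=> lu uw wh Hd.
have Hd' x : u <= x <= w -> is_derive x 1 g (g' x).
  by move=> /andP [ux xw]; apply: Hd; apply/andP; split; lra.
have hdv : {in `[u, w], forall x, derivable g x 1}.
  by move=> x; rewrite in_itv /= => /Hd' [].
have hd x : x \in `]u, w[ -> is_derive x 1 g (g' x).
  by rewrite in_itv /= => /andP [ux xw]; apply: Hd'; rewrite !ltW.
have [c] := MVT uw hd (derivable_within_continuous hdv).
by rewrite in_itv /= => hc E; exists c.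
Qed.

Lemma MVT_from0 (g g' : R -> R) (del s : R) :
  (forall x : R, `|x| < del -> is_derive x 1 g (g' x)) -> `|s| < del -> s != 0 ->
  exists c, [/\ 0 < c * s, `|c| < `|s| & g s - g 0 = g' c * s].
Proof.
move=> Hd; rewrite ltr_norml => /andP [s1 s2]; have del0 : 0 < del by lra.
have {}Hd (x : R) : - del < x < del -> is_derive x 1 g (g' x) by rewrite -ltr_norml; apply: Hd.
case: (ltgtP s 0) => // [sn | sp] _.
- have [c /andP [c1 c2] E] := MVT_in s1 sn del0 Hd.
  exists c; split; first by nra.
    by rewrite !ltr0_norm //; lra.
  by rewrite -opprB E; ring.
- have ndel0 : - del < 0 by lra.
  have [c /andP [c1 c2] E] := MVT_in ndel0 sp s2 Hd.
  exists c; split; first by nra.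
    by rewrite !gtr0_norm //; lra.
  by rewrite E subr0.
Qed.

Lemma ge0_at_left_continuous (g : R -> R) (x : R) :
  {for x, continuous g} -> (\forall r \near x^'-, 0 <= g r) -> 0 <= g x.
Proof.
move=> gx near_ge0.
apply: (closed_cvg (fun y : R => 0 <= y)) near_ge0 _ (cvg_at_left_filter gx).
exact: closed_ge.
Qed.

Lemma is_derive_lipschitz (g g' : R -> R) (r M u w : R) :
  (forall x : R, `|x| < r -> is_derive x 1 g (g' x)) -> (forall x, `|x| < r -> `|g' x| <= M) ->
  `|u| < r -> `|w| < r -> `|g w - g u| <= M * `|w - u|.
Proof.
move=> Hd HM; rewrite !ltr_norml => /andP [u1 u2] /andP [w1 w2].
have {}Hd (x : R) : - r < x < r -> is_derive x 1 g (g' x) by rewrite -ltr_norml; apply: Hd.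
have le_M c : - r < c < r -> `|g' c| <= M by rewrite -ltr_norml; apply: HM.
case: (ltgtP u w) => [uw | wu | ->]; last by rewrite !subrr normr0 mulr0.
- have [c /andP [uc cw] ->] := MVT_in u1 uw w2 Hd.
  by rewrite normrM ler_wpM2r // le_M //; apply/andP; split; lra.
- have [c /andP [wc cu] E] := MVT_in w1 wu u2 Hd.
  rewrite distrC E distrC normrM ler_wpM2r // le_M //; apply/andP; split; lra.
Qed.

Section DerivativeChain.
Variables (f : nat -> R -> R) (del : R).
Hypothesis del0 : 0 < del.
Hypothesis f_deriv :
  forall k, (k < 3)%N -> forall s : R, `|s| < del -> is_derive s 1 (f k) (f k.+1 s).
Hypothesis f00 : f 0%N 0 = 0.

(* [0 < c ^+ j * x * g c] for [c] near 0 says that [g] has the sign of [x] right of 0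
   and the sign of [(-1) ^+ j * x] left of 0. *)
Lemma derive_sign_propagate k (x : R) (j : nat) (e : R) :
  (k < 3)%N -> e <= del -> f k 0 = 0 ->
  (forall c, 0 < `|c| < e -> 0 < c ^+ j * x * f k.+1 c) ->
  forall s, 0 < `|s| < e -> 0 < s ^+ j.+1 * x * f k s.
Proof.
move=> k3 ed fk0 Hc s /andP [s0 se].
have sdel : `|s| < del by lra.
have [|c [cs lt_cs E]] := MVT_from0 (f_deriv k3) sdel; first by rewrite -normr_gt0.
have c0 : 0 < `|c| by rewrite normr_gt0; apply: contraTneq cs => ->; rewrite mul0r ltxx.
have pos_c : 0 < c ^+ j * x * f k.+1 c by apply: Hc; rewrite c0 (lt_trans lt_cs se).
rewrite fk0 subr0 in E; rewrite E.
have pos : 0 < (c * s) ^+ j * (c ^+ j * x * f k.+1 c) by rewrite mulr_gt0 // exprn_gt0.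
have cj2 : 0 < (c ^+ j) ^+ 2 by rewrite exprn_even_gt0 //= expf_neq0 // -normr_gt0.
have -> : s ^+ j.+1 * x * (f k.+1 c * s) = s ^+ 2 * (s ^+ j * x * f k.+1 c) by rewrite exprS; ring.
rewrite mulr_gt0 ?exprn_even_gt0 //= -?normr_gt0 //.
by rewrite -(pmulr_rgt0 _ cj2); move: pos; rewrite exprMn; congr (0 < _); ring.
Qed.

Lemma pos_of_derive2_pos (eta : R) : eta <= del -> f 1%N 0 = 0 ->
  (forall s, `|s| < eta -> 0 < f 2%N s) -> forall s, 0 < `|s| < eta -> 0 < f 0%N s.
Proof.
move=> etadel f10 Hf2 s hs.
have Hf1 c : 0 < `|c| < eta -> 0 < c ^+ 1 * 1 * f 1%N c.
  apply: (@derive_sign_propagate 1%N 1 0%N) => // {}c /andP [_ /Hf2].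
  by rewrite expr0 !mul1r.
have := derive_sign_propagate (isT : (0 < 3)%N) etadel f00 Hf1 hs.
by rewrite mulr1 pmulr_rgt0 // exprn_even_gt0 //= -normr_gt0; case/andP: hs.
Qed.

Lemma derive2_ge_lipschitz (M : R) : (forall s, `|s| < del -> `|f 3%N s| <= M) ->
  forall s, `|s| < del -> f 2%N 0 - M * `|s| <= f 2%N s.
Proof.
move=> HM s sdel; have [-> | sn0] := eqVneq s 0; first by rewrite normr0 mulr0 subr0.
have [c [_ lt_cs E]] := MVT_from0 (f_deriv (isT : (2 < 3)%N)) sdel sn0.
have : `|f 3%N c * s| <= M * `|s|.
  by rewrite normrM ler_wpM2r // HM // (lt_trans lt_cs sdel).
by rewrite -E ler_norml => /andP [h _]; lra.
Qed.

Section LocalMinimum.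
Hypothesis f_ge0 : forall s, `|s| < del -> 0 <= f 0%N s.

Lemma min_derive1_eq0 : f 1%N 0 = 0.
Proof.
have del_in : (0 : R) \in `]- del, del[ by rewrite in_itv /= oppr_lt0 del0.
have deriv t : t \in `]- del, del[ -> derivable (f 0%N) t 1.
  by rewrite in_itv /= -ltr_norml => /(f_deriv (isT : (0 < 3)%N)) [].
have min t : t \in `]- del, del[ -> f 0%N 0 <= f 0%N t.
  by rewrite in_itv /= -ltr_norml f00; apply: f_ge0.
have ndel : - del <= del by rewrite ge0_cp // ltW.
have [_ Df0] := derive1_at_min ndel deriv del_in min.
have del0' : `|0 : R| < del by rewrite normr0.
by have [_ <-] := f_deriv (isT : (0 < 3)%N) del0'.
Qed.

Let sign_near0 k : (k < 2)%N -> f k.+1 0 = 0 -> f k.+2 0 != 0 ->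
  exists2 e, 0 < e <= del & forall c, 0 < `|c| < e -> 0 < c ^+ 1 * f k.+2 0 * f k.+1 c.
Proof.
move=> k2 fk0 fk2; have d0 : `|0 : R| < del by rewrite normr0.
have [e e0 He] := derive_sign_near0 (f_deriv (k2 : (k.+1 < 3)%N) d0) fk0 fk2.
exists (Num.min e del); first by rewrite lt_min e0 del0 ge_min lexx orbT.
by move=> c /andP [c0]; rewrite lt_min => /andP [ce _]; apply: He; rewrite c0.
Qed.

Let half_in (e : R) : 0 < e <= del -> 0 < `|e / 2| < e /\ `|e / 2| < del.
Proof. by case/andP=> e0 edel; rewrite gtr0_norm ?divr_gt0 //; split; [apply/andP|]; lra. Qed.

Lemma min_derive2_ge0 : 0 <= f 2%N 0.
Proof.
rewrite leNgt; apply/negP => f2neg.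
have [e he He] := sign_near0 (isT : (0 < 2)%N) min_derive1_eq0 (ltr0_neq0 f2neg).
have [hs sdel] := half_in he; case/andP: he => e0 edel.
have := derive_sign_propagate (isT : (0 < 3)%N) edel f00 He hs.
rewrite -mulrA pmulr_rgt0; last by rewrite exprn_gt0 // divr_gt0.
by rewrite ltNge mulr_le0_ge0 ?f_ge0 // ltW.
Qed.

Lemma min_derive3_eq0 : f 2%N 0 = 0 -> f 3%N 0 = 0.
Proof.
move=> f20; apply/eqP/negP => /negP f3n0.
have [e he He] := sign_near0 (isT : (1 < 2)%N) f20 f3n0.
have [hs sdel] := half_in he; case/andP: he => e0 edel.
have Hf1 := derive_sign_propagate (isT : (1 < 3)%N) edel min_derive1_eq0 He.
have Hf0 := derive_sign_propagate (isT : (0 < 3)%N) edel f00 Hf1.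
have contra s : `|s| = `|e / 2| -> s ^+ 3 * f 3%N 0 < 0 -> False.
  move=> ns s3d; have := Hf0 s; rewrite ns => /(_ hs).
  by rewrite ltNge mulr_le0_ge0 ?f_ge0 ?ltW // ns.
have e20 : 0 < (e / 2) ^+ 3 by rewrite exprn_gt0 // divr_gt0.
case: (ltgtP (f 3%N 0) 0) f3n0 => // [dneg | dpos] _.
- by apply: (contra (e / 2)) => //; rewrite pmulr_rlt0.
- apply: (contra (- (e / 2))); first by rewrite normrN.
  have -> : (- (e / 2)) ^+ 3 * f 3%N 0 = - ((e / 2) ^+ 3 * f 3%N 0) by ring.
  by rewrite oppr_lt0 mulr_gt0.
Qed.

End LocalMinimum.

End DerivativeChain.

End RealCalculus.

Section ComplexModulus.
Variable R : realType.
Local Notation C := R[i].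
Local Open Scope complex_scope.

Lemma cabs_sq (a b : R) : cabs (Complex a b) ^+ 2 = a ^+ 2 + b ^+ 2.
Proof. by rewrite /cabs /= sqr_sqrtr // addr_ge0 // sqr_ge0. Qed.

Lemma cabs_ge0 (x : C) : 0 <= cabs x.
Proof. by case: x => a b; rewrite /cabs /= sqrtr_ge0. Qed.

Lemma cabs_eq0 (x : C) : (cabs x == 0) = (x == 0).
Proof. by apply/eqP/eqP => [/Normc.eq0_normc | ->]; last exact: Normc.normc0. Qed.

Lemma cabsM (x y : C) : cabs (x * y) = cabs x * cabs y.
Proof. exact: Normc.normcM. Qed.

Lemma cabsV (x : C) : cabs x^-1 = (cabs x)^-1.
Proof. exact: Normc.normcV. Qed.

Lemma cabsN (x : C) : cabs (- x) = cabs x.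
Proof. exact: normcN. Qed.

Lemma cabs_conj (x : C) : cabs x^* = cabs x.
Proof. by case: x => a b; rewrite /cabs /= sqrrN. Qed.

Lemma cabsX (x : C) k : cabs (x ^+ k) = cabs x ^+ k.
Proof.
elim: k => [|k IH]; first by rewrite !expr0 /cabs /= expr0n /= addr0 expr1n sqrtr1.
by rewrite !exprS cabsM IH.
Qed.

Lemma conjcM_unit (z : C) : cabs z = 1 -> z^* * z = 1.
Proof.
case: z => a b h; have := cabs_sq a b; rewrite h expr1n => e.
apply/eqP; rewrite eq_complex /=; apply/andP; split; apply/eqP.
  by rewrite -[RHS]/(1 : R) e; ring.
by rewrite -[RHS]/(0 : R); ring.
Qed.

Lemma expi0 : expi 0 = 1 :> C.
Proof. by rewrite /expi cos0 sin0. Qed.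

Lemma cabs_expi (t : R) : cabs (expi t) = 1.
Proof. by rewrite /cabs /= cos2Dsin2 sqrtr1. Qed.

End ComplexModulus.

Section Reflection.
Variable R : realType.
Local Notation C := R[i].
Local Open Scope complex_scope.

Definition bideg_le (q : {poly {poly C}}) (m n : nat) :=
  forall j i, q`_j`_i != 0 -> (i <= m)%N && (j <= n)%N.

Lemma eval2_bideg_le (q : {poly {poly C}}) (m n : nat) z1 z2 : bideg_le q m n ->
  eval2 q z1 z2 = \sum_(j < n.+1) \sum_(i < m.+1) q`_j`_i * z1 ^+ i * z2 ^+ j.
Proof.
move=> hq.
have out_i j i : (m < i)%N -> q`_j`_i = 0.
  move=> hi; apply/eqP/negPn/negP => /hq /andP [].
  by rewrite leqNgt hi.
have out_j j : (n < j)%N -> q`_j = 0.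
  move=> hj; apply/polyP => i; rewrite coef0; apply/eqP/negPn/negP => /hq /andP [_].
  by rewrite leqNgt hj.
rewrite /eval2 (@horner_coef_wide _ n.+1); last first.
  by apply/leq_sizeP => j hj; rewrite coef_map_id0 ?horner0 // out_j ?horner0.
apply: eq_bigr => j _; rewrite coef_map_id0 ?horner0 //.
rewrite (@horner_coef_wide _ m.+1); last by apply/leq_sizeP => i hi; apply: out_i.
by rewrite mulr_suml.
Qed.

Lemma refl2_bideg_le m n q : bideg_le (refl2 m n q) m n.
Proof.
move=> j i; rewrite /refl2 coef_poly; case: ltnP => hj; last by rewrite coef0 eqxx.
rewrite coef_poly; case: ltnP => hi; last by rewrite eqxx.
by rewrite -ltnS hi -ltnS hj.
Qed.

Lemma exprB_unit (z : C) k M : cabs z = 1 -> (k <= M)%N -> z ^+ (M - k) = z ^+ M * z^* ^+ k.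
Proof.
move=> hz hk; rewrite -{2}(subnK hk) exprD -mulrA -exprMn (mulrC z) conjcM_unit //.
by rewrite expr1n mulr1.
Qed.

(* On T^2, [1 / conj z = z], so this is the paper's [z1^m z2^n conj(q(1/conj z1, 1/conj z2))]. *)
Lemma refl2_torus m n q (z1 z2 : C) : bideg_le q m n -> cabs z1 = 1 -> cabs z2 = 1 ->
  eval2 (refl2 m n q) z1 z2 = z1 ^+ m * z2 ^+ n * (eval2 q z1 z2)^*.
Proof.
move=> hq h1 h2.
rewrite (eval2_bideg_le _ _ (@refl2_bideg_le m n q)) (eval2_bideg_le _ _ hq).
rewrite rmorph_sum mulr_sumr (reindex_inj rev_ord_inj) /=; apply: eq_bigr => j _.
rewrite rmorph_sum mulr_sumr (reindex_inj rev_ord_inj) /=; apply: eq_bigr => i _.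
have hj : (j <= n)%N by rewrite -ltnS ltn_ord.
have hi : (i <= m)%N by rewrite -ltnS ltn_ord.
rewrite /refl2 coef_poly /= !subSS ltnS leq_subr coef_poly ltnS leq_subr !subKn //.
by rewrite (exprB_unit h1 hi) (exprB_unit h2 hj) !rmorphM !rmorphXn /=; ring.
Qed.

Lemma cabs_refl2_torus m n q (t1 t2 : R) : bideg_le q m n ->
  cabs (eval2 (refl2 m n q) (expi t1) (expi t2)) = cabs (eval2 q (expi t1) (expi t2)).
Proof.
move=> hq; rewrite refl2_torus ?cabs_expi //.
by rewrite !cabsM !cabsX !cabs_expi cabs_conj !expr1n !mul1r.
Qed.

End Reflection.

Section ComplexExpr.
Variable R : realType.
Local Notation C := R[i].
Local Notation texpr := (texpr R).

Definition cexpr := (texpr * texpr)%type.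

Definition cteval (z : cexpr) (t1 t2 : R) : C := Complex (teval z.1 t1 t2) (teval z.2 t1 t2).

Definition cexpr_add (x y : cexpr) : cexpr := (TAdd x.1 y.1, TAdd x.2 y.2).

Definition cexpr_mul (x y : cexpr) : cexpr :=
  (TAdd (TMul x.1 y.1) (TOpp (TMul x.2 y.2)), TAdd (TMul x.1 y.2) (TMul x.2 y.1)).

Definition cexpr_const (c : C) : cexpr := let: Complex a b := c in (TConst a, TConst b).

Definition chorner (s : seq cexpr) (Z : cexpr) : cexpr :=
  foldr (fun a acc => cexpr_add (cexpr_mul acc Z) a) (cexpr_const 0) s.

Definition chorner2 (q : {poly {poly C}}) (Z1 Z2 : cexpr) : cexpr :=
  chorner [seq chorner (map cexpr_const r) Z1 | r : {poly C} <- q] Z2.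

Definition csqnorm (z : cexpr) : texpr := TAdd (TMul z.1 z.1) (TMul z.2 z.2).

Definition ctinv_free (z : cexpr) := tinv_free z.1 && tinv_free z.2.

Lemma cteval_const c t1 t2 : cteval (cexpr_const c) t1 t2 = c.
Proof. by case: c. Qed.

Lemma cteval_chorner s Z t1 t2 :
  cteval (chorner s Z) t1 t2 = horner_rec [seq cteval a t1 t2 | a <- s] (cteval Z t1 t2).
Proof. by elim: s => [|a s IH]; [exact: cteval_const | rewrite /= -IH]. Qed.

Lemma cteval_chorner2 q Z1 Z2 t1 t2 :
  cteval (chorner2 q Z1 Z2) t1 t2 = eval2 q (cteval Z1 t1 t2) (cteval Z2 t1 t2).
Proof.
rewrite /eval2 map_polyE horner_Poly cteval_chorner -map_comp; congr horner_rec.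
apply: eq_map => r /=; rewrite cteval_chorner -map_comp.
by under eq_map do rewrite /= cteval_const; rewrite map_id.
Qed.

Lemma teval_csqnorm z t1 t2 : teval (csqnorm z) t1 t2 = cabs (cteval z t1 t2) ^+ 2.
Proof. by rewrite cabs_sq /= !expr2. Qed.

Lemma ctinv_free_chorner s Z :
  all ctinv_free s -> ctinv_free Z -> ctinv_free (chorner s Z).
Proof.
move=> hs /andP [h1 h2]; elim: s hs => [|[a b] s IH] //= /andP [/andP [ha hb] /IH].
by rewrite /ctinv_free /= => /andP [-> ->]; rewrite h1 h2 ha hb.
Qed.

Lemma ctinv_free_chorner2 q Z1 Z2 :
  ctinv_free Z1 -> ctinv_free Z2 -> ctinv_free (chorner2 q Z1 Z2).
Proof.
move=> hZ1 hZ2; apply: ctinv_free_chorner hZ2; rewrite all_map; apply/allP => r _ /=.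
by apply: ctinv_free_chorner hZ1; rewrite all_map; apply/allP => -[].
Qed.

Lemma tinv_free_csqnorm z : ctinv_free z -> tinv_free (csqnorm z).
Proof. by move=> /andP [h1 h2] /=; rewrite h1 h2. Qed.

End ComplexExpr.

Section TrigExprAnalysis.
Variable R : realType.
Local Notation texpr := (texpr R).
Implicit Types (e X Y : texpr) (a b : R).

Definition box (d t1 t2 : R) := `|t1| < d /\ `|t2| < d.

Definition tcoef e (k l : nat) : R :=
  teval (iter k (tderiv true) (iter l (tderiv false) e)) 0 0 / ((k`!)%:R * (l`!)%:R).

Lemma taylor_coef00 (f : R -> R -> R) : taylor_coef f 0 0 = f 0 0.
Proof. by rewrite /taylor_coef !derive1n0 mulr1 divr1. Qed.

Lemma box_ray d a b s : `|a| <= 1 -> `|b| <= 1 -> `|s| < d -> box d (s * a) (s * b).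
Proof.
by move=> ha hb hs; split; rewrite normrM; apply: le_lt_trans hs; rewrite ler_piMr.
Qed.

Lemma is_derive_teval_ray e a b s : tdefined e (s * a) (s * b) ->
  is_derive s 1 (fun s => teval e (s * a) (s * b)) (teval (tdir a b e) (s * a) (s * b)).
Proof.
have E x : (0 : R) + x = x by rewrite add0r.
move=> h; have := @is_derive_teval_line R e 0 0 a b s; rewrite !E => /(_ h).
by under eq_fun do rewrite !E.
Qed.

Lemma teval_tderiv_ext first X Y t1 t2 :
  (forall u1 u2, teval X u1 u2 = teval Y u1 u2) -> tdefined X t1 t2 -> tdefined Y t1 t2 ->
  teval (tderiv first X) t1 t2 = teval (tderiv first Y) t1 t2.
Proof.
move=> XY hX hY; case: first.
- have := is_derive_teval1 hX; have := is_derive_teval1 hY.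
  by under [fun s => teval X s t2]eq_fun do rewrite XY; move=> [_ <-] [_ <-].
- have := is_derive_teval2 hX; have := is_derive_teval2 hY.
  by under [fun s => teval X t1 s]eq_fun do rewrite XY; move=> [_ <-] [_ <-].
Qed.

Lemma taylor_coef_teval (f : R -> R -> R) e mu d (k l : nat) : 0 < mu -> 0 < d ->
  (forall t1 t2, f t1 t2 = teval e t1 t2) -> tdenoms_ge e mu (box d) ->
  taylor_coef f k l = tcoef e k l.
Proof.
move=> mu0 d0 fe he; rewrite /taylor_coef /tcoef; congr (_ / _).
have defined j i t1 t2 : box d t1 t2 ->
    tdefined (iter j (tderiv true) (iter i (tderiv false) e)) t1 t2.
  by apply: tdenoms_ge_defined mu0 _; do 2 apply: tdenoms_ge_iter_deriv.
have inner t1 : `|t1| < d ->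
    derive1n l (fun t2 => f t1 t2) 0 = teval (iter l (tderiv false) e) t1 0.
  move=> ht1; apply: (@derive1n_chain R _ (fun i t2 => teval (iter i (tderiv false) e) t1 t2)
    (- d) d) => //; last by rewrite oppr_lt0 d0.
  move=> i s hs; apply: is_derive_teval2.
  by apply: (defined 0%N); split => //; rewrite ltr_norml.
apply: (@derive1n_chain R _
  (fun j t1 => teval (iter j (tderiv true) (iter l (tderiv false) e)) t1 0)
  (- d) d) => //; last by rewrite oppr_lt0 d0.
- move=> j s hs; apply: is_derive_teval1.
  by apply: defined; split; rewrite ?normr0 // ltr_norml.
- by move=> s hs; apply: inner; rewrite ltr_norml.
Qed.

Lemma tinv_free_lipschitz0 X : tinv_free X -> exists M, 0 <= M /\
  forall t1 t2, `|t1| < 1 -> `|t2| < 1 -> `|teval X t1 t2 - teval X 0 0| <= M * (`|t1| + `|t2|).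
Proof.
move=> hX; pose P (t1 t2 : R) := `|t1| < 2 /\ `|t2| < 2.
have HK t1 t2 : P t1 t2 -> `|t1| <= 2 by case=> /ltW.
have bounded first := tdenoms_ge_bounded ltr01 HK
  (tinv_free_denoms_ge 1 P (tinv_free_deriv first hX)).
have [M1 [M10 H1]] := bounded true; have [M2 [M20 H2]] := bounded false.
exists (M1 + M2); split=> [|t1 t2 ht1 ht2]; first exact: addr_ge0.
have lt2 (u : R) : `|u| < 1 -> `|u| < 2 by move=> /lt_le_trans; apply; lra.
have a1 : `|teval X t1 t2 - teval X 0 t2| <= M1 * `|t1 - 0|.
  apply: (@is_derive_lipschitz R (fun s => teval X s t2) _ 2) => //.
  - by move=> s _; apply: is_derive_teval1; apply: tinv_free_defined.
  - by move=> s hs; apply: H1; split; last exact: lt2.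
  - by rewrite normr0.
  - exact: lt2.
have a2 : `|teval X 0 t2 - teval X 0 0| <= M2 * `|t2 - 0|.
  apply: (@is_derive_lipschitz R (fun s => teval X 0 s) _ 2) => //.
  - by move=> s _; apply: is_derive_teval2; apply: tinv_free_defined.
  - by move=> s hs; apply: H2; split; rewrite ?normr0.
  - by rewrite normr0.
  - exact: lt2.
rewrite !subr0 in a1 a2; have -> : teval X t1 t2 - teval X 0 0
  = (teval X t1 t2 - teval X 0 t2) + (teval X 0 t2 - teval X 0 0) by ring.
have n1 := normr_ge0 t1; have n2 := normr_ge0 t2.
by apply: le_trans (ler_normD _ _) _; nra.
Qed.

Definition dirw a b (first : bool) := if first then a else b.

Lemma teval_tdir3 a b e t1 t2 : teval (iter 3 (tdir a b) e) t1 t2 =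
  \sum_(w : bool * bool * bool)
    dirw a b w.1.1 * dirw a b w.1.2 * dirw a b w.2
    * teval (tderiv w.1.1 (tderiv w.1.2 (tderiv w.2 e))) t1 t2.
Proof.
pose G i j k :=
  dirw a b i * dirw a b j * dirw a b k * teval (tderiv i (tderiv j (tderiv k e))) t1 t2.
rewrite -(pair_big xpredT xpredT (fun ij k => G ij.1 ij.2 k)) /=.
rewrite -(pair_big xpredT xpredT (fun i j => \sum_(k : bool) G i j k)) /=.
by rewrite !big_bool /G /=; ring.
Qed.

Lemma norm_sum_weighted_le (I : finType) (c x : I -> R) (M : R) :
  (forall i, `|c i| <= 1) -> (forall i, `|x i| <= M) -> `|\sum_i c i * x i| <= #|I|%:R * M.
Proof.
move=> hc hx; apply: le_trans (ler_norm_sum _ _ _) _.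
rewrite mulr_natl -sumr_const; apply: ler_sum => i _.
by rewrite normrM -[M]mul1r ler_pM.
Qed.

Lemma tdir3_bounded e mu d : 0 < mu -> tdenoms_ge e mu (box d) ->
  exists M, forall a b t1 t2, `|a| <= 1 -> `|b| <= 1 -> box d t1 t2 ->
    `|teval (iter 3 (tdir a b) e) t1 t2| <= M.
Proof.
move=> mu0 he; have HK t1 t2 : box d t1 t2 -> `|t1| <= d by case=> /ltW.
have [M HM] := @tdenoms_ge_bounded_fam _ _
  (fun w : bool * bool * bool => tderiv w.1.1 (tderiv w.1.2 (tderiv w.2 e))) _ _ _ mu0 HK
  (fun w => tdenoms_ge_deriv _ (tdenoms_ge_deriv _ (tdenoms_ge_deriv _ he))).
exists (#|{: bool * bool * bool}|%:R * M) => a b t1 t2 ha hb ht.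
rewrite teval_tdir3; apply: norm_sum_weighted_le => [w | w]; last exact: HM.
have hw (i : bool) : `|dirw a b i| <= 1 by case: i.
by rewrite !normrM !mulr_ile1.
Qed.

Lemma teval_tdir1_0 a b e :
  teval (iter 1 (tdir a b) e) 0 0 = tcoef e 1 0 * a + tcoef e 0 1 * b.
Proof. by rewrite /tcoef /= !mulr1 !divr1 mulrC [b * _]mulrC. Qed.

Lemma teval_tdir2_0 a b e : teval (iter 2 (tdir a b) e) 0 0
  = 2 * (tcoef e 2 0 * a ^+ 2 + tcoef e 1 1 * a * b + tcoef e 0 2 * b ^+ 2).
Proof.
have f2 : (2`!)%:R = 2 :> R by [].
by rewrite /tcoef /= f2 !mulr1 !mul1r !divr1 teval_tderivC; field.
Qed.

(* Symmetry of mixed partials is an identity of values, not of expressions, so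
   differentiating it once more needs both expressions to be defined at the origin. *)
Lemma teval_tdir3_0 a b e :
  tdefined (tderiv false (tderiv true e)) 0 0 -> tdefined (tderiv true (tderiv false e)) 0 0 ->
  teval (iter 3 (tdir a b) e) 0 0 = 6 * (tcoef e 3 0 * a ^+ 3 + tcoef e 2 1 * a ^+ 2 * b
    + tcoef e 1 2 * a * b ^+ 2 + tcoef e 0 3 * b ^+ 3).
Proof.
move=> h21 h12; have f2 : (2`!)%:R = 2 :> R by []; have f3 : (3`!)%:R = 6 :> R by [].
have C12 u1 u2 := esym (@teval_tderivC R e u1 u2).
have E121 := teval_tderiv_ext true C12 h21 h12.
have E221 := teval_tderiv_ext false C12 h21 h12.
have E211 := teval_tderivC (tderiv true e) 0 0.
have E212 := teval_tderivC (tderiv false e) 0 0.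
rewrite /tcoef /= f2 f3 !mulr1 !mul1r -E211 E121 E221 -E212.
by field.
Qed.

End TrigExprAnalysis.

Section BinaryForms.
Variable R : realFieldType.
Implicit Types (al be ga A B C D : R).

Lemma quad_form_ge0 al be ga :
  (forall a b : R, `|a| <= 1 -> `|b| <= 1 -> 0 <= al * a ^+ 2 + be * a * b + ga * b ^+ 2) ->
  forall a b : R, 0 <= al * a ^+ 2 + be * a * b + ga * b ^+ 2.
Proof.
move=> H a b; pose K := `|a| + `|b| + 1.
have n1 := normr_ge0 a; have n2 := normr_ge0 b.
have K0 : 0 < K by rewrite /K; lra.
have normK (x : R) : `|x| <= K -> `|x / K| <= 1.
  by rewrite normrM normfV (gtr0_norm K0) ler_pdivrMr // mul1r.
have ka : `|a| <= K by rewrite /K; lra.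
have kb : `|b| <= K by rewrite /K; lra.
have := H _ _ (normK a ka) (normK b kb).
have -> : al * (a / K) ^+ 2 + be * (a / K) * (b / K) + ga * (b / K) ^+ 2
  = (al * a ^+ 2 + be * a * b + ga * b ^+ 2) / K ^+ 2 by field; rewrite gt_eqF.
by rewrite pmulr_lge0 // invr_gt0 exprn_gt0.
Qed.

Lemma quad_form_posdef_lb al be ga :
  (forall a b : R, (a, b) != (0, 0) -> 0 < al * a ^+ 2 + be * a * b + ga * b ^+ 2) ->
  exists2 lam, 0 < lam &
    forall a b : R, lam * (a ^+ 2 + b ^+ 2) <= al * a ^+ 2 + be * a * b + ga * b ^+ 2.
Proof.
move=> hQ; have nz (x y : R) : x != 0 -> (x, y) != (0, 0) by rewrite xpair_eqE negb_and => ->.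
have al0 : 0 < al.
  have := hQ 1 0 (nz _ _ (oner_neq0 R)).
  by have -> : al * 1 ^+ 2 + be * 1 * 0 + ga * 0 ^+ 2 = al by ring.
have ga0 : 0 < ga.
  have := hQ 0 1; rewrite xpair_eqE eqxx oner_eq0 => /(_ isT).
  by have -> : al * 0 ^+ 2 + be * 0 * 1 + ga * 1 ^+ 2 = ga by ring.
pose D := 4 * al * ga - be ^+ 2.
have D0 : 0 < D.
  have n2al : - (2 * al) != 0 by apply: ltr0_neq0; lra.
  have := hQ be (- (2 * al)); rewrite xpair_eqE negb_and n2al orbT => /(_ isT).
  have -> : al * be ^+ 2 + be * be * - (2 * al)
    + ga * (- (2 * al)) ^+ 2 = al * D by rewrite /D; ring.
  by rewrite pmulr_rgt0.
exists (D / (4 * (al + ga))); first by rewrite divr_gt0 //; lra.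
move=> a b.
rewrite mulrAC ler_pdivrMr; last by lra.
have sq1 := sqr_ge0 (2 * al * a + be * b); have sq2 := sqr_ge0 (2 * ga * b + be * a).
have -> : (al * a ^+ 2 + be * a * b + ga * b ^+ 2) * (4 * (al + ga))
  = (2 * al * a + be * b) ^+ 2 + (2 * ga * b + be * a) ^+ 2 + D * (a ^+ 2 + b ^+ 2).
  by rewrite /D; ring.
by rewrite lerDr addr_ge0.
Qed.

Lemma cubic_form_eq0 A B C D :
  (forall a b : R, `|a| <= 1 -> `|b| <= 1 ->
     A * a ^+ 3 + B * a ^+ 2 * b + C * a * b ^+ 2 + D * b ^+ 3 = 0) ->
  [/\ A = 0, B = 0, C = 0 & D = 0].
Proof.
move=> H.
have n0 : `|0 : R| <= 1 by rewrite normr0.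
have n1 : `|1 : R| <= 1 by rewrite normr1.
have nN1 : `|-1 : R| <= 1 by rewrite normrN normr1.
have eA : A = 0 by rewrite -(H 1 0 n1 n0); ring.
have eD : D = 0 by rewrite -(H 0 1 n0 n1); ring.
have eBC : B + C = 0 by rewrite -(H 1 1 n1 n1) eA eD; ring.
have eBC' : C - B = 0 by rewrite -(H 1 (-1) n1 nN1) eA eD; ring.
by split=> //; lra.
Qed.

End BinaryForms.

Section UnitCircle.
Variable R : realType.
Local Notation C := R[i].

Lemma expi_near1 (eta : R) : 0 < eta -> exists2 eps : R, 0 < eps &
  forall z : C, cabs z = 1 -> cabs (z - 1) < eps -> exists2 t : R, `|t| < eta & expi t = z.
Proof.
move=> eta0; have h0 : -1 < (0 : R) < 1 by rewrite ltr01 andbT oppr_lt0 ltr01.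
have asin0 : asin (0 : R) = 0.
  rewrite -[X in asin X]sin0 sinK // in_itv /= oppr_le0 andbC.
  by apply/andP; split; apply: divr_ge0 => //; apply: pi_ge0.
have [e' e'0 He'] := continuous_asin h0 (nbhsx_ballx (asin (0 : R)) eta eta0).
exists (Num.min e' 1) => [|[x y] hz]; first by rewrite lt_min e'0 ltr01.
have hxy : x ^+ 2 + y ^+ 2 = 1 by rewrite -cabs_sq hz expr1n.
rewrite (_ : cabs _ = Num.sqrt ((x - 1) ^+ 2 + y ^+ 2)); last by rewrite /cabs /= oppr0 addr0.
rewrite lt_min => /andP [he' h1].
have le_sqrt (u v : R) : `|u| <= Num.sqrt (u ^+ 2 + v ^+ 2).
  by rewrite -sqrtr_sqr ler_wsqrtr // lerDl sqr_ge0.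
have hy : `|y| < e' by apply: le_lt_trans he'; rewrite addrC le_sqrt.
have x0 : 0 < x.
  by have := le_lt_trans (le_sqrt (x - 1) y) h1; rewrite ltr_norml => /andP [? _]; lra.
have y1 : -1 <= y <= 1.
  by rewrite -ler_norml; apply: ltW; apply: le_lt_trans h1; rewrite addrC le_sqrt.
exists (asin y).
  have := He' y; rewrite /ball /= sub0r normrN => /(_ hy).
  by rewrite asin0 sub0r normrN.
rewrite /expi asinK ?in_itv //= cos_asin //.
have -> : 1 - y ^+ 2 = x ^+ 2 by lra.
by rewrite sqrtr_sqr gtr0_norm.
Qed.

End UnitCircle.

Section LinearInZ3.
Variable R : realType.
Local Notation C := R[i].
Variables (p : {poly {poly {poly C}}}) (p1 p2 : {poly {poly C}}).
Hypothesis p_split : p = p1%:P + 'X * p2%:P.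

Let coef_p0 : p`_0 = p1.
Proof. by rewrite p_split coefD coefC coefXM /= addr0. Qed.

Let coef_p1 : p`_1 = p2.
Proof. by rewrite p_split coefD coefXM !coefC /= add0r. Qed.

Let coef_pS k : (1 < k)%N -> p`_k = 0.
Proof. by rewrite p_split coefD coefXM !coefC; case: k => [|[|k]] //= _; rewrite addr0. Qed.

Lemma eval3_split (z1 z2 z3 : C) : eval3 p z1 z2 z3 = eval2 p1 z1 z2 + z3 * eval2 p2 z1 z2.
Proof.
have eval2_0 : eval2 0 z1 z2 = 0 by rewrite /eval2 map_poly0 horner0.
rewrite /eval3 (@horner_coef_wide _ 2); last first.
  by apply/leq_sizeP => j hj; rewrite coef_map_id0 // coef_pS.
rewrite !big_ord_recr big_ord0 /= add0r !coef_map_id0 // coef_p0 coef_p1.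
by rewrite expr0 expr1 mulr1 mulrC.
Qed.

Lemma bideg_le_multideg3 m n :
  has_multideg3 m n 1 p -> bideg_le p1 m n /\ bideg_le p2 m n.
Proof.
case=> H _ _ _; split => j i hji.
  by have := H i j 0%N; rewrite /coef3 coef_p0 => /(_ hji) /and3P [-> ->].
by have := H i j 1%N; rewrite /coef3 coef_p1 => /(_ hji) /and3P [-> ->].
Qed.

Hypothesis p_zero_free : zero_free_D3 p.

Lemma zero_free_disk_le (w1 w2 : C) : cabs w1 < 1 -> cabs w2 < 1 ->
  cabs (eval2 p2 w1 w2) <= cabs (eval2 p1 w1 w2).
Proof.
move=> h1 h2; rewrite leNgt; apply/negP => hlt.
set a := eval2 p1 w1 w2 in hlt; set b := eval2 p2 w1 w2 in hlt.
have cb0 : 0 < cabs b by apply: le_lt_trans hlt; apply: cabs_ge0.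
have b0 : b != 0 by rewrite -cabs_eq0 gt_eqF.
have hc : cabs (- a / b) < 1 by rewrite cabsM cabsN cabsV ltr_pdivrMr // mul1r.
have := p_zero_free h1 h2 hc.
by rewrite eval3_split -/a -/b divfK // addrN eqxx.
Qed.

Definition polar_cexpr (th : R) : cexpr R :=
  (TMul TVar1 (TConst (cos th)), TMul TVar1 (TConst (sin th))).

Lemma cabs_polar (th r : R) : cabs (cteval (polar_cexpr th) r 0) = `|r|.
Proof.
rewrite /cabs /= -sqrtr_sqr; congr Num.sqrt.
by rewrite !exprMn -mulrDr cos2Dsin2 mulr1.
Qed.

(* Pass to the limit r -> 1- along the rays r e^{i th}, on which p1 and p2
   are polynomial in r. *)
Lemma zero_free_torus_le (t1 t2 : R) :
  cabs (eval2 p2 (expi t1) (expi t2)) ^+ 2 <= cabs (eval2 p1 (expi t1) (expi t2)) ^+ 2.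
Proof.
pose sqnorm q := csqnorm (chorner2 q (polar_cexpr t1) (polar_cexpr t2)).
pose F := TAdd (sqnorm p1) (TOpp (sqnorm p2)).
pose z r t := cteval (polar_cexpr t) r 0.
have FE r : teval F r 0 =
    cabs (eval2 p1 (z r t1) (z r t2)) ^+ 2 - cabs (eval2 p2 (z r t1) (z r t2)) ^+ 2.
  have -> : teval F r 0 = teval (sqnorm p1) r 0 - teval (sqnorm p2) r 0 by [].
  by rewrite !teval_csqnorm !cteval_chorner2.
have polar1 t : z 1 t = expi t by rewrite /z /cteval /expi /= !mul1r.
rewrite -subr_ge0 -polar1 -[expi t2]polar1 -FE.
have hF : tinv_free F.
  by apply/andP; split; apply: tinv_free_csqnorm; apply: ctinv_free_chorner2.
apply: (@ge0_at_left_continuous _ (fun r => teval F r 0)).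
  apply/differentiable_continuous/derivable1_diffP.
  by have [] := is_derive_teval1 (tinv_free_defined 1 0 hF).
near=> r; rewrite FE subr_ge0 lerXn2r ?nnegrE ?cabs_ge0 //.
have r0 : 0 <= r by near: r; exact: nbhs_left_ge.
have r1 : r < 1 by near: r; exact: nbhs_left_lt.
by apply: zero_free_disk_le; rewrite cabs_polar ger0_norm.
Unshelve. all: by end_near.
Qed.

End LinearInZ3.

Section RhoExpr.
Variable R : realType.
Local Notation C := R[i].
Variables (m n : nat) (p1 p2 : {poly {poly C}}).

Definition torus_sqnorm (q : {poly {poly C}}) : texpr R :=
  csqnorm (chorner2 (refl2 m n q) (TCos1, TSin1) (TCos2, TSin2)).

Definition rho_texpr : texpr R :=
  TAdd (TConst 1) (TOpp (TMul (torus_sqnorm p2) (TInv (torus_sqnorm p1)))).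

Lemma teval_torus_sqnorm q t1 t2 :
  teval (torus_sqnorm q) t1 t2 = cabs (eval2 (refl2 m n q) (expi t1) (expi t2)) ^+ 2.
Proof. by rewrite teval_csqnorm cteval_chorner2. Qed.

Lemma tinv_free_torus_sqnorm q : tinv_free (torus_sqnorm q).
Proof. exact/tinv_free_csqnorm/ctinv_free_chorner2. Qed.

Lemma rho_texprE t1 t2 : rho m n p1 p2 t1 t2 = teval rho_texpr t1 t2.
Proof.
have -> : teval rho_texpr t1 t2
  = 1 - teval (torus_sqnorm p2) t1 t2 * (teval (torus_sqnorm p1) t1 t2)^-1 by [].
rewrite !teval_torus_sqnorm /rho /psi0.
by rewrite mulNr cabsN cabsM cabsV exprMn exprVn.
Qed.

End RhoExpr.

Section Rho.
Variable R : realType.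
Local Notation C := R[i].
Variables (m n : nat) (p : {poly {poly {poly C}}}) (p1 p2 : {poly {poly C}}).
Hypothesis p_split : p = p1%:P + 'X * p2%:P.
Hypotheses (p1_bideg : bideg_le p1 m n) (p2_bideg : bideg_le p2 m n).
Hypothesis p_zero_free : zero_free_D3 p.
Hypothesis p_111 : in_ZpT3 p 1 1 1.
Hypothesis not_vertical : ~ (forall z3 : C, cabs z3 = 1 -> eval3 p 1 1 z3 = 0).

Local Notation rho := (rho m n p1 p2).
Local Notation e := (rho_texpr m n p1 p2).
Implicit Types (a b s : R).

Lemma eval2_p2_11 : eval2 p2 1 1 = - eval2 p1 1 1.
Proof.
case: p_111 => _ _ _; rewrite (eval3_split p_split) mul1r => /eqP.
by rewrite addrC addr_eq0 => /eqP.
Qed.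

Lemma eval2_p1_11_neq0 : eval2 p1 1 1 != 0.
Proof.
apply/negP => /eqP h0; apply: not_vertical => z3 _.
by rewrite (eval3_split p_split) eval2_p2_11 h0 oppr0 mulr0 addr0.
Qed.

Lemma rho_torus t1 t2 : rho t1 t2 =
  1 - cabs (eval2 p2 (expi t1) (expi t2)) ^+ 2 / cabs (eval2 p1 (expi t1) (expi t2)) ^+ 2.
Proof.
by rewrite /rho /psi0 mulNr cabsN cabsM cabsV !cabs_refl2_torus // exprMn exprVn.
Qed.

Lemma rho_ge0 t1 t2 : 0 <= rho t1 t2.
Proof.
rewrite rho_torus subr_ge0; have := zero_free_torus_le p_split p_zero_free t1 t2.
set a := _ ^+ 2; set b := _ ^+ 2 => ab.
have [-> | b_neq0] := eqVneq b 0; first by rewrite invr0 mulr0.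
by rewrite ler_pdivrMr ?mul1r // lt_def b_neq0 exprn_ge0 ?cabs_ge0.
Qed.

Lemma rho00 : rho 0 0 = 0.
Proof.
rewrite rho_torus expi0 eval2_p2_11 cabsN divff ?subrr //.
by rewrite expf_neq0 // cabs_eq0 eval2_p1_11_neq0.
Qed.

Let mu := cabs (eval2 p1 1 1) ^+ 2.

Let mu_gt0 : 0 < mu.
Proof. by rewrite exprn_gt0 // lt_def cabs_eq0 eval2_p1_11_neq0 cabs_ge0. Qed.

(* The denominator |p1(e^{i t1}, e^{i t2})|^2 is Lipschitz near the origin, where it equals [mu]. *)
Lemma rho_denoms_ge : exists2 d, 0 < d & tdenoms_ge e (mu / 2) (box d).
Proof.
have [M [M0 HM]] := tinv_free_lipschitz0 (tinv_free_torus_sqnorm m n p1).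
pose d := Num.min (1 / 2) (mu / (4 * (M + 1))).
have d0 : 0 < d by rewrite lt_min divr_gt0 //= divr_gt0 //; lra.
have d_le : d <= 1 / 2 by rewrite ge_min lexx.
have dM : d * (4 * (M + 1)) <= mu by rewrite -ler_pdivlMr ?ge_min ?lexx ?orbT //; lra.
have N1_0 : teval (torus_sqnorm m n p1) 0 0 = mu.
  by rewrite teval_torus_sqnorm cabs_refl2_torus // expi0.
exists d => //; split=> //; split; first exact: tinv_free_denoms_ge (tinv_free_torus_sqnorm _ _ _).
split; first exact: tinv_free_denoms_ge (tinv_free_torus_sqnorm _ _ _).
move=> t1 t2 [h1 h2]; apply: le_trans (ler_norm _).
have d1 : d <= 1 by lra.
have := HM t1 t2 (lt_le_trans h1 d1) (lt_le_trans h2 d1); rewrite N1_0 ler_norml.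
have : M * (`|t1| + `|t2|) <= M * (2 * d) by rewrite ler_wpM2l //; lra.
by move=> ? /andP [? _]; lra.
Qed.

Definition ray a b k s := teval (iter k (tdir a b) e) (s * a) (s * b).

Section NearOrigin.
Variable d : R.
Hypotheses (d0 : 0 < d) (e_denoms : tdenoms_ge e (mu / 2) (box d)).

Local Notation c := (taylor_coef rho).

Let mu2_gt0 : 0 < mu / 2.
Proof. by rewrite divr_gt0. Qed.

Lemma taylor_coef_rho k l : c k l = tcoef e k l.
Proof. exact: taylor_coef_teval mu2_gt0 d0 (rho_texprE _ _ _ _) e_denoms. Qed.

Lemma ray_deriv a b : `|a| <= 1 -> `|b| <= 1 ->
  forall k, (k < 3)%N -> forall s, `|s| < d -> is_derive s 1 (ray a b k) (ray a b k.+1 s).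
Proof.
move=> ha hb k _ s hs; apply: is_derive_teval_ray.
exact: tdenoms_ge_defined mu2_gt0 (tdenoms_ge_iter_dir _ _ k e_denoms) (box_ray ha hb hs).
Qed.

Lemma ray_at0 a b k : ray a b k 0 = teval (iter k (tdir a b) e) 0 0.
Proof. by rewrite /ray !mul0r. Qed.

Let ray00 a b : ray a b 0 0 = 0.
Proof. by rewrite ray_at0 -rho_texprE rho00. Qed.

Let ray_ge0 a b s : `|s| < d -> 0 <= ray a b 0 s.
Proof. by rewrite /ray -rho_texprE rho_ge0. Qed.

Lemma rho_first_order a b : `|a| <= 1 -> `|b| <= 1 -> c 1 0 * a + c 0 1 * b = 0.
Proof.
move=> ha hb; rewrite !taylor_coef_rho -teval_tdir1_0 -ray_at0.
exact: (min_derive1_eq0 d0 (ray_deriv ha hb) (ray00 a b) (@ray_ge0 a b)).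
Qed.

Lemma rho_second_order a b : `|a| <= 1 -> `|b| <= 1 ->
  0 <= c 2 0 * a ^+ 2 + c 1 1 * a * b + c 0 2 * b ^+ 2.
Proof.
move=> ha hb; rewrite !taylor_coef_rho -(pmulr_rge0 _ (ltr0Sn _ 1)) -teval_tdir2_0 -ray_at0.
exact: (min_derive2_ge0 d0 (ray_deriv ha hb) (ray00 a b) (@ray_ge0 a b)).
Qed.

Lemma rho_third_order a b : `|a| <= 1 -> `|b| <= 1 ->
  c 2 0 * a ^+ 2 + c 1 1 * a * b + c 0 2 * b ^+ 2 = 0 ->
  c 3 0 * a ^+ 3 + c 2 1 * a ^+ 2 * b + c 1 2 * a * b ^+ 2 + c 0 3 * b ^+ 3 = 0.
Proof.
move=> ha hb Q0.
have defined0 X : tdenoms_ge X (mu / 2) (box d) -> tdefined X 0 0.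
  by move=> hX; apply: tdenoms_ge_defined mu2_gt0 hX _; split; rewrite normr0.
have := min_derive3_eq0 d0 (ray_deriv ha hb) (ray00 a b) (@ray_ge0 a b).
rewrite !ray_at0 teval_tdir2_0 teval_tdir3_0; last 2 first.
- by apply: defined0; do 2 apply: tdenoms_ge_deriv.
- by apply: defined0; do 2 apply: tdenoms_ge_deriv.
rewrite !taylor_coef_rho in Q0 *; rewrite Q0 mulr0 => /(_ erefl) /eqP.
by rewrite mulf_eq0 pnatr_eq0 => /eqP.
Qed.

Let p1_torus_neq0 t1 t2 : box d t1 t2 -> eval2 p1 (expi t1) (expi t2) != 0.
Proof.
case: e_denoms => _ [_ [_ /(_ t1 t2) lb]] /lb /(lt_le_trans mu2_gt0).
rewrite teval_torus_sqnorm cabs_refl2_torus // -cabs_eq0.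
by apply: contraTneq => ->; rewrite expr0n normr0 ltxx.
Qed.

(* At a zero of p on T^3, |p1| = |p2| forces rho = 0, unless p1 vanishes too (then
   rho = 1 - 0 / 0 = 1); the lower bound on the denominator excludes this near 0. *)
Lemma isolated_of_rho_pos (eta : R) : 0 < eta <= d ->
  (forall t1 t2, `|t1| < eta -> `|t2| < eta -> (t1, t2) != (0, 0) -> 0 < rho t1 t2) ->
  exists2 eps, 0 < eps & forall z1 z2 z3 : C, in_ZpT3 p z1 z2 z3 ->
    cabs (z1 - 1) < eps -> cabs (z2 - 1) < eps -> cabs (z3 - 1) < eps ->
    [/\ z1 = 1, z2 = 1 & z3 = 1].
Proof.
move=> /andP [eta0 eta_d] Hpos; have [eps eps0 Hangle] := expi_near1 eta0.
exists eps => // z1 z2 z3 [c1 c2 c3 hz] hz1 hz2 _.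
have [t1 ht1 ?] := Hangle z1 c1 hz1; have [t2 ht2 ?] := Hangle z2 c2 hz2; subst z1 z2.
rewrite (eval3_split p_split) in hz.
case: (eqVneq (t1, t2) (0, 0)) hz => [[-> ->] | hne] hz.
  rewrite expi0 in hz *; split=> //.
  have /eqP : eval2 p1 1 1 * (1 - z3) = 0 by rewrite -hz eval2_p2_11; ring.
  by rewrite mulf_eq0 (negbTE eval2_p1_11_neq0) subr_eq0 => /eqP.
have := Hpos t1 t2 ht1 ht2 hne; rewrite rho_torus.
have -> : cabs (eval2 p2 (expi t1) (expi t2)) = cabs (eval2 p1 (expi t1) (expi t2)).
  by move/eqP: hz; rewrite addr_eq0 => /eqP ->; rewrite cabsN cabsM c3 mul1r.
rewrite divff ?subrr ?ltxx // expf_neq0 // cabs_eq0 p1_torus_neq0 //.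
by split; apply: lt_le_trans eta_d.
Qed.

Lemma rho_jet1_eq0 : c 0 0 = 0 /\ c 1 0 = 0 /\ c 0 1 = 0.
Proof.
have n0 : `|0 : R| <= 1 by rewrite normr0.
have n1 : `|1 : R| <= 1 by rewrite normr1.
have := rho_first_order n1 n0; have := rho_first_order n0 n1.
rewrite taylor_coef00 rho00 !mulr1 !mulr0 addr0 add0r.
by split.
Qed.

Lemma rho_hessian_psd t1 t2 : 0 <= c 2 0 * t1 ^+ 2 + c 1 1 * t1 * t2 + c 0 2 * t2 ^+ 2.
Proof. by apply: quad_form_ge0 => a b; apply: rho_second_order. Qed.

Lemma rho_cubic_eq0 : (forall t1 t2, c 2 0 * t1 ^+ 2 + c 1 1 * t1 * t2 + c 0 2 * t2 ^+ 2 = 0) ->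
  [/\ c 3 0 = 0, c 2 1 = 0, c 1 2 = 0 & c 0 3 = 0].
Proof. by move=> Q0; apply: cubic_form_eq0 => a b ha hb; apply: rho_third_order. Qed.

Hypothesis Q_posdef : forall a b, (a, b) != (0, 0) ->
  0 < c 2 0 * a ^+ 2 + c 1 1 * a * b + c 0 2 * b ^+ 2.

(* Strict convexity along all unit rays at once: the second derivative at the origin
   is bounded below by the definite form and the third derivative is bounded. *)
Lemma ray_convex_near0 : exists2 eta, 0 < eta <= d &
  forall a b, `|a| + `|b| = 1 -> forall s, `|s| < eta -> 0 < ray a b 2 s.
Proof.
have [lam lam0 Hlam] := quad_form_posdef_lb Q_posdef.
have [M HM] := tdir3_bounded mu2_gt0 e_denoms.
pose eta := Num.min d (lam / (2 * (`|M| + 1))).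
have nM := normr_ge0 M.
have eta0 : 0 < eta by rewrite lt_min d0 divr_gt0 //; lra.
have eta_d : eta <= d by rewrite ge_min lexx.
have eta_lam : eta * (2 * (`|M| + 1)) <= lam by rewrite -ler_pdivlMr ?ge_min ?lexx ?orbT //; lra.
exists eta; first by rewrite eta0 eta_d.
move=> a b hab s hs; have na := normr_ge0 a; have nb := normr_ge0 b.
have ha : `|a| <= 1 by lra.
have hb : `|b| <= 1 by lra.
have ab2 : 1 <= 2 * (a ^+ 2 + b ^+ 2).
  rewrite -[a ^+ 2]real_normK ?num_real // -[b ^+ 2]real_normK ?num_real //.
  have := sqr_ge0 (`|a| - `|b|); have : (`|a| + `|b|) ^+ 2 = 1 by rewrite hab expr1n.
  by move=> h1 h2; nra.
have ray2_0 : lam <= ray a b 2 0.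
  rewrite ray_at0 teval_tdir2_0 -!taylor_coef_rho.
  by have := Hlam a b; nra.
have bound3 s' : `|s'| < d -> `|ray a b 3 s'| <= `|M|.
  by move=> hs'; apply: le_trans (HM _ _ _ _ ha hb (box_ray ha hb hs')) (ler_norm _).
have := derive2_ge_lipschitz (ray_deriv ha hb) bound3 (lt_le_trans hs eta_d).
have : `|M| * `|s| <= `|M| * eta by rewrite ler_wpM2l // ltW.
nra.
Qed.

Lemma rho_pos_near0 : exists2 eta, 0 < eta <= d &
  forall t1 t2, `|t1| < eta -> `|t2| < eta -> (t1, t2) != (0, 0) -> 0 < rho t1 t2.
Proof.
have [eta /andP [eta0 eta_d] Hpos] := ray_convex_near0.
exists (eta / 2); first by rewrite divr_gt0 //=; lra.
move=> t1 t2 h1 h2 hne; pose s := `|t1| + `|t2|.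
have s0 : 0 < s.
  rewrite lt_def addr_ge0 // andbT paddr_eq0 // !normr_eq0.
  by apply: contra hne => /andP [/eqP -> /eqP ->].
pose a := t1 / s; pose b := t2 / s.
have scale t : t = s * (t / s) by rewrite mulrC divfK // gt_eqF.
have hab : `|a| + `|b| = 1.
  by rewrite /a /b !normrM !normfV (gtr0_norm s0) -mulrDl divff // gt_eqF.
have na := normr_ge0 a; have nb := normr_ge0 b.
have ha : `|a| <= 1 by lra.
have hb : `|b| <= 1 by lra.
have ray1_0 : ray a b 1 0 = 0.
  by rewrite ray_at0 teval_tdir1_0 -!taylor_coef_rho rho_first_order.
have hs : 0 < `|s| < eta by rewrite gtr0_norm // s0 /s; lra.
have := pos_of_derive2_pos (ray_deriv ha hb) (ray00 a b) eta_d ray1_0 (Hpos a b hab) hs.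
by rewrite /ray -rho_texprE -!scale.
Qed.

Lemma isolated_singularity : exists2 eps, 0 < eps &
  forall z1 z2 z3 : C, in_ZpT3 p z1 z2 z3 ->
    cabs (z1 - 1) < eps -> cabs (z2 - 1) < eps -> cabs (z3 - 1) < eps ->
    [/\ z1 = 1, z2 = 1 & z3 = 1].
Proof. by have [eta eta_d rho_pos] := rho_pos_near0; apply: isolated_of_rho_pos rho_pos. Qed.

End NearOrigin.

End Rho.

Theorem lemma3p10 (R : realType) (m n : nat)
  (p : {poly {poly {poly R[i]}}}) (p1 p2 : {poly {poly R[i]}}) :
  irreducible_RIF_deg_mn1 m n p ->
  p = p1%:P + 'X * p2%:P ->
  in_ZpT3 p 1 1 1 ->
  ~ (forall z3 : R[i], cabs z3 = 1 -> eval3 p 1 1 z3 = 0) ->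
  let c := taylor_coef (rho m n p1 p2) in
  let Q := fun t1 t2 : R => c 2%N 0%N * t1 ^+ 2 + c 1%N 1%N * t1 * t2 + c 0%N 2%N * t2 ^+ 2 in
  [/\ c 0%N 0%N = 0 /\ c 1%N 0%N = 0 /\ c 0%N 1%N = 0,
      (forall t1 t2 : R, 0 <= Q t1 t2),
      ((forall t1 t2 : R, (t1, t2) != (0, 0) -> 0 < Q t1 t2) ->
         exists2 e : R, 0 < e &
           forall z1 z2 z3 : R[i], in_ZpT3 p z1 z2 z3 ->
             cabs (z1 - 1) < e -> cabs (z2 - 1) < e -> cabs (z3 - 1) < e ->
             [/\ z1 = 1, z2 = 1 & z3 = 1]) &
      ((forall t1 t2 : R, Q t1 t2 = 0) ->
         [/\ c 3%N 0%N = 0, c 2%N 1%N = 0, c 1%N 2%N = 0 & c 0%N 3%N = 0])].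
Proof.
move=> [[p_deg p_zero_free _] _] p_split p_111 not_vertical c Q; rewrite {}/Q {}/c.
have [p1_bideg p2_bideg] := bideg_le_multideg3 p_split p_deg.
have [d d0 e_denoms] := rho_denoms_ge p_split p1_bideg p_111 not_vertical.
split.
- exact (rho_jet1_eq0 p_split p1_bideg p2_bideg p_zero_free p_111 not_vertical d0 e_denoms).
- exact (rho_hessian_psd p_split p1_bideg p2_bideg p_zero_free p_111 not_vertical d0 e_denoms).
- exact (isolated_singularity p_split p1_bideg p2_bideg p_zero_free p_111 not_vertical d0 e_denoms).
- exact (rho_cubic_eq0 p_split p1_bideg p2_bideg p_zero_free p_111 not_vertical d0 e_denoms).
Qed.
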